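(* Let $\mu$ be a cardinal with $\mu=\mu^{<\mu}$, let $\varepsilon<\mu$ be a limit ordinal, and let $P$ be a forcing notion satisfying $*^\varepsilon_\mu$. Then $P$ satisfies the $\mu^+$-chain condition.
   Context: A forcing notion is a quasi order $P$ with a minimal element $\emptyset_P$. Let $D$ be the filter on $\mu^+$ of sets $A$ such that for some club $E$ of $\mu^+$, every $i\in E$ of cofinality $\mu$ is in $A$; ''$\forall^D i$'' means ''for all $i$ in some member of $D$''. The game $*^\varepsilon_\mu[P]$ lasts $\varepsilon$ moves. In the $\zeta$-th move: Player I, if $\zeta\neq0$, chooses $\langle q^\zeta_i:i<\mu^+\rangle$ with $q^\zeta_i\in P$ such that for every $\xi<\zeta$, $(\forall^D i)\,p^\xi_i\le q^\zeta_i$, and chooses $f_\zeta:\mu^+\to\mu^+$ with $f_\zeta(i)<i$ for all $i$ in some club of $\mu^+$; if $\zeta=0$, $q^0_i=\emptyset_P$ for all $i$ and $f_0$ is identically $0$. Then Player II chooses $\langle p^\zeta_i:i<\mu^+\rangle$, $p^\zeta_i\in P$, with $(\forall^D i)\,q^\zeta_i\le p^\zeta_i$. Player I wins the play if (he always had a legal move and) there is $E\in D$ such that whenever $\mu<i<j<\mu^+$, $i,j\in E$, $\mathrm{cf}(i)=\mathrm{cf}(j)=\mu$ and $f_\xi(i)=f_\xi(j)$ for all $\xi<\varepsilon$, the set $\{p^\zeta_i:\zeta<\varepsilon\}\cup\{p^\zeta_j:\zeta<\varepsilon\}$ has an upper bound in $P$. $P$ satisfies $*^\varepsilon_\mu$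 if Player I has a winning strategy in $*^\varepsilon_\mu[P]$. The $\mu^+$-chain condition means every antichain of $P$ has cardinality at most $\mu$. *)

From Stdlib Require Import Relations Wellfounded.

Definition well_order {T : Type} (lt : T -> T -> Prop) : Prop :=
  well_founded lt /\ (forall x y z, lt x y -> lt y z -> lt x z) /\
  (forall x y, lt x y \/ x = y \/ lt y x).

Definition inj_on {A B : Type} (X : A -> Prop) (f : A -> B) : Prop :=
  forall x y, X x -> X y -> f x = f y -> x = y.

(* (M, ltM) is (the von Neumann ordinal of) a cardinal mu:
   no injection of M into a proper initial segment. *)
Definition is_cardinal {M : Type} (ltM : M -> M -> Prop) : Prop :=
  well_order ltM /\
  forall m, ~ exists g : M -> M, (forall x, ltM (g x) m) /\ inj_on (fun _ => True) g.

(* mu^{<mu} = mu : the set  U_{alpha<mu} ^alpha mu  injects into mu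
   (a sequence of length alpha is coded as a pair (alpha, g) with g only
   relevant below alpha). The inequality mu <= mu^{<mu} is trivial. *)
Definition mu_lt_mu_eq_mu {M : Type} (ltM : M -> M -> Prop) : Prop :=
  exists F : M -> (M -> M) -> M,
    forall a b g h, F a g = F b h -> a = b /\ forall x, ltM x a -> g x = h x.

(* (K, ltK) is the ordinal mu^+ : every proper initial segment has
   cardinality <= mu, and K itself does not. *)
Definition is_succ_card {M K : Type} (ltM : M -> M -> Prop) (ltK : K -> K -> Prop) : Prop :=
  well_order ltK /\
  (forall k, exists g : K -> M, inj_on (fun x => ltK x k) g) /\
  ~ (exists g : K -> M, inj_on (fun _ => True) g).

Definition is_limit {M : Type} (ltM : M -> M -> Prop) (eps : M) : Prop :=
  (exists x, ltM x eps) /\ forall x, ltM x eps -> exists y, ltM x y /\ ltM y eps.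

Section SetTheory.
Context {M K : Type} (ltM : M -> M -> Prop) (ltK : K -> K -> Prop).

Definition cofinal_in (i : K) (X : K -> Prop) : Prop :=
  (forall x, X x -> ltK x i) /\
  forall j, ltK j i -> exists x, X x /\ (j = x \/ ltK j x).

Definition cf_eq_mu (i : K) : Prop :=
  (exists X, cofinal_in i X /\
     exists f : K -> M, inj_on X f /\ forall m, exists x, X x /\ f x = m) /\
  forall X, cofinal_in i X ->
     exists g : M -> K, (forall m, X (g m)) /\ inj_on (fun _ => True) g.

Definition club (C : K -> Prop) : Prop :=
  (forall j, exists c, C c /\ ltK j c) /\
  (forall i, (exists j, ltK j i) ->
     (forall j, ltK j i -> exists c, C c /\ ltK j c /\ ltK c i) -> C i).

Definition forallD (A : K -> Prop) : Prop :=
  exists C, club C /\ forall i, C i -> cf_eq_mu i -> A i.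

(* mu < i, where mu is regarded as an ordinal below mu^+ *)
Definition mu_lt (i : K) : Prop :=
  exists k, ltK k i /\
    exists h : K -> M,
      (forall x y, ltK x k -> ltK y k -> (ltK x y <-> ltM (h x) (h y))) /\
      (forall m, exists x, ltK x k /\ h x = m).

Context {P : Type} (leP : P -> P -> Prop) (e : P) (eps : M).

(* A strategy for player I: at move zeta, given II's moves
   (p : M -> K -> P, of which only p xi for xi < zeta may be used),
   it returns (q^zeta, f_zeta). *)
Definition strategyI := M -> (M -> K -> P) -> (K -> P) * (K -> K).

Definition nonanticipating (s : strategyI) : Prop :=
  forall z h h', (forall x, ltM x z -> forall i, h x i = h' x i) ->
    forall i, fst (s z h) i = fst (s z h') i /\ snd (s z h) i = snd (s z h') i.

Definition I_legal (s : strategyI) (p : M -> K -> P) (z : M) : Prop :=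
  ((forall x, ~ ltM x z) ->
      forall i, fst (s z p) i = e /\ forall k, ~ ltK k (snd (s z p) i)) /\
  ((exists x, ltM x z) ->
      (forall x, ltM x z -> forallD (fun i => leP (p x i) (fst (s z p) i))) /\
      exists C, club C /\ forall i, C i -> ltK (snd (s z p) i) i).

Definition II_legal (s : strategyI) (p : M -> K -> P) : Prop :=
  forall z, ltM z eps -> forallD (fun i => leP (fst (s z p) i) (p z i)).

Definition I_wins_play (s : strategyI) (p : M -> K -> P) : Prop :=
  exists E : K -> Prop, forallD E /\
    forall i j, E i -> E j -> mu_lt i -> ltK i j -> cf_eq_mu i -> cf_eq_mu j ->
      (forall x, ltM x eps -> snd (s x p) i = snd (s x p) j) ->
      exists r, forall z, ltM z eps -> leP (p z i) r /\ leP (p z j) r.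

Definition winning_strategyI (s : strategyI) : Prop :=
  nonanticipating s /\
  forall p, II_legal s p ->
    (forall z, ltM z eps -> I_legal s p z) /\ I_wins_play s p.

Definition satisfies_star : Prop := exists s, winning_strategyI s.

End SetTheory.

Definition forcing_notion {P : Type} (leP : P -> P -> Prop) (e : P) : Prop :=
  (forall p, leP p p) /\ (forall p q r, leP p q -> leP q r -> leP p r) /\
  (forall p, leP e p).

Definition chain_condition {M P : Type} (leP : P -> P -> Prop) : Prop :=
  forall A : P -> Prop,
    (forall a b, A a -> A b -> a <> b -> ~ exists r, leP a r /\ leP b r) ->
    exists g : P -> M, inj_on A g.

(* Suppose {a_k : k < mu^+} is an antichain. Player II opens the game with <a_k> and then
   copies player I's moves; the functions f_zeta of I's winning strategy are regressive on
   clubs, so I's win yields a common upper bound of a_i and a_j as soon as i < j are points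
   of cofinality mu in the winning set with f_zeta(i) = f_zeta(j) for all zeta < eps.
   Such a pair exists by a pressing-down argument. At a point i of cofinality mu > eps the
   values f_zeta(i) lie below some gamma(i) < i. If the sequences <f_zeta(i) : zeta < eps>
   separated the points of cofinality mu, each fibre of gamma would be coded injectively by
   the mu^{<mu} = mu sequences of length eps below gamma(i), hence bounded by some
   beta(gamma(i)); but a point s of cofinality mu lying in the clubs and closed under beta
   would satisfy both s < beta(gamma(s)) and beta(gamma(s)) < s. *)

From Stdlib Require Import Classical ClassicalEpsilon FunctionalExtensionality.

Lemma inj_left_inverse {A B : Type} (a0 : A) (f : A -> B) :
  (forall a b, f a = f b -> a = b) -> exists g : B -> A, forall a, g (f a) = a.
Proof.
  intros Hf. exists (fun y => epsilon (inhabits a0) (fun a => f a = y)).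
  intro a. apply Hf. apply (epsilon_spec (inhabits a0) (fun a' => f a' = f a)). eauto.
Qed.

Section WellOrder.
Context {T : Type} {lt : T -> T -> Prop} (wo : well_order lt).

Lemma wo_trans {x y z} : lt x y -> lt y z -> lt x z.
Proof. exact (proj1 (proj2 wo) x y z). Qed.

Lemma wo_trichotomy x y : lt x y \/ x = y \/ lt y x.
Proof. exact (proj2 (proj2 wo) x y). Qed.

Lemma wo_irrefl x : ~ lt x x.
Proof. induction (proj1 wo x) as [x _ IH]. intro Hxx. exact (IH x Hxx Hxx). Qed.

Lemma wo_asym {x y} : lt x y -> ~ lt y x.
Proof. intros Hxy Hyx. exact (wo_irrefl x (wo_trans Hxy Hyx)). Qed.

Lemma wo_le_lt {x y z} : x = y \/ lt x y -> lt y z -> lt x z.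
Proof. intros [<- | Hxy] Hyz; [exact Hyz | exact (wo_trans Hxy Hyz)]. Qed.

Lemma wo_lt_le {x y z} : lt x y -> y = z \/ lt y z -> lt x z.
Proof. intros Hxy [<- | Hyz]; [exact Hxy | exact (wo_trans Hxy Hyz)]. Qed.

Lemma wo_not_lt {x y} : ~ lt x y -> y = x \/ lt y x.
Proof.
  intros Hxy. destruct (wo_trichotomy x y) as [H | [H | H]]; [contradiction | left | right]; auto.
Qed.

Lemma wo_min_lt {y k i} : (forall x, ~ lt x y) -> lt k i -> lt y i.
Proof.
  intros Hmin Hki.
  destruct (wo_not_lt (Hmin k)) as [-> | Hky]; [exact Hki | exact (wo_trans Hky Hki)].
Qed.

Lemma wo_least (Q : T -> Prop) x0 : Q x0 -> exists x, Q x /\ forall y, Q y -> ~ lt y x.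
Proof.
  intros Hx0. induction (proj1 wo x0) as [x _ IH].
  destruct (classic (exists y, Q y /\ lt y x)) as [[y [Qy Hyx]] | Hnone].
  - exact (IH y Hyx Qy).
  - exists x. split; [exact Hx0 |]. intros y Qy Hyx. apply Hnone. eauto.
Qed.

Lemma cofinal_in_exists (X : T -> Prop) k :
  (forall x, X x -> lt x k) -> exists i, cofinal_in lt i X.
Proof.
  intros Hk. destruct (wo_least (fun i => forall x, X x -> lt x i) k Hk) as [i [Hi Hmin]].
  exists i. split; [exact Hi |]. intros j Hj. apply NNPP. intro Hnone.
  apply (Hmin j); [| exact Hj]. intros x Hx.
  destruct (wo_not_lt (fun Hxj => Hnone (ex_intro _ x (conj Hx (or_intror Hxj))))) as [-> | Hxj].
  - exfalso. apply Hnone. eauto.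
  - exact Hxj.
Qed.

Lemma wo_rec_choice {B : Type} (b0 : B) (Q : T -> (T -> B) -> B -> Prop) :
  (forall x h h', (forall y, lt y x -> h y = h' y) -> forall b, Q x h b -> Q x h' b) ->
  (forall x h, (forall y, lt y x -> Q y h (h y)) -> exists b, Q x h b) ->
  exists f : T -> B, forall x, Q x f (f x).
Proof.
  intros Hext Hstep.
  set (restrict := fun x (rec : forall y, lt y x -> B) y =>
         match excluded_middle_informative (lt y x) with
         | left Hy => rec y Hy | right _ => b0 end).
  set (step := fun x rec => epsilon (inhabits b0) (Q x (restrict x rec))).
  set (f := Fix (proj1 wo) (fun _ => B) step).
  assert (Hunfold : forall x, f x = step x (fun y _ => f y)).
  { intro x. apply (Fix_eq (proj1 wo) (fun _ => B) step). intros x' g g' Hgg'.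
    unfold step. replace (restrict x' g') with (restrict x' g); [reflexivity |].
    apply functional_extensionality. intro y. unfold restrict.
    destruct (excluded_middle_informative (lt y x')); [apply Hgg' | reflexivity]. }
  exists f. intro x. induction (proj1 wo x) as [x _ IH].
  assert (Hres : forall y, lt y x -> f y = restrict x (fun y _ => f y) y).
  { intros y Hy. unfold restrict.
    destruct (excluded_middle_informative (lt y x)); [reflexivity | contradiction]. }
  rewrite Hunfold. apply (Hext x (restrict x (fun y _ => f y))).
  { intros y Hy. symmetry. exact (Hres y Hy). }
  apply epsilon_spec. destruct (Hstep x f IH) as [b Hb]. exists b. exact (Hext x f _ Hres b Hb).
Qed.

End WellOrder.

Lemma increasing_inj {A T : Type} {ltA : A -> A -> Prop} {lt : T -> T -> Prop}
  (woA : well_order ltA) (wo : well_order lt) (f : A -> T) :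
  (forall a b, ltA a b -> lt (f a) (f b)) -> forall a b, f a = f b -> a = b.
Proof.
  intros Hf a b Hab. destruct (wo_trichotomy woA a b) as [H | [H | H]]; [| exact H |];
    apply Hf in H; rewrite Hab in H; destruct (wo_irrefl wo _ H).
Qed.

Lemma increasing_lt_iff {A T : Type} {ltA : A -> A -> Prop} {lt : T -> T -> Prop}
  (woA : well_order ltA) (wo : well_order lt) (f : A -> T) :
  (forall a b, ltA a b -> lt (f a) (f b)) -> forall a b, lt (f a) (f b) <-> ltA a b.
Proof.
  intros Hf a b. split; [| apply Hf]. intros Hfab.
  destruct (wo_trichotomy woA a b) as [H | [-> | H]]; [exact H | |].
  - destruct (wo_irrefl wo _ Hfab).
  - destruct (wo_asym wo Hfab (Hf _ _ H)).
Qed.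

Section SmallCardinal.
Context {M : Type} {ltM : M -> M -> Prop}.
Hypotheses (HM : is_cardinal ltM) (HF : mu_lt_mu_eq_mu ltM)
  (mu_gt_two : exists a b c, ltM a b /\ ltM b c).

Let woM : well_order ltM := proj1 HM.

Lemma card_inhabited : inhabited M.
Proof. destruct mu_gt_two as [a _]. exact (inhabits a). Qed.

Lemma card_no_inj_below m (g : M -> M) : (forall x, ltM (g x) m) -> ~ inj_on (fun _ => True) g.
Proof. intros Hg Hinj. apply (proj2 HM m). exists g. auto. Qed.

Lemma card_pairing :
  exists pr : M -> M -> M, forall u v u' v', pr u v = pr u' v' -> u = u' /\ v = v'.
Proof.
  destruct HF as [F HFinj]. destruct mu_gt_two as [a [b [c [Hab Hbc]]]].
  exists (fun u v => F c (fun t => if excluded_middle_informative (t = a) then u else v)).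
  intros u v u' v' E. destruct (HFinj _ _ _ _ E) as [_ Hag]. split.
  - specialize (Hag a (wo_trans woM Hab Hbc)). simpl in Hag.
    destruct (excluded_middle_informative (a = a)); [exact Hag | contradiction].
  - specialize (Hag b Hbc). simpl in Hag.
    destruct (excluded_middle_informative (b = a)) as [-> | _];
      [destruct (wo_irrefl woM _ Hab) | exact Hag].
Qed.

Lemma card_no_max m : exists n, ltM m n.
Proof.
  apply NNPP. intro Hmax.
  assert (Hbelow : forall x, x <> m -> ltM x m).
  { intros x Hx. destruct (wo_not_lt woM (fun Hmx => Hmax (ex_intro _ x Hmx))) as [-> | H];
      [contradiction | exact H]. }
  destruct HF as [F HFinj]. destruct mu_gt_two as [a [b [c [Hab Hbc]]]].
  assert (Hconst_inj : forall d, ltM a d -> inj_on (fun _ => True) (fun x => F d (fun _ => x))).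
  { intros d Had u v _ _ E. exact (proj2 (HFinj _ _ _ _ E) a Had). }
  destruct (classic (exists u, F b (fun _ => u) = m)) as [[u Hu] | Hmiss].
  - apply (card_no_inj_below m (fun x => F c (fun _ => x)));
      [| exact (Hconst_inj c (wo_trans woM Hab Hbc))].
    intro x. apply Hbelow. rewrite <- Hu. intro E. destruct (proj1 (HFinj _ _ _ _ E)).
    exact (wo_irrefl woM _ Hbc).
  - apply (card_no_inj_below m (fun x => F b (fun _ => x))); [| exact (Hconst_inj b Hab)].
    intro x. apply Hbelow. intro E. apply Hmiss. eauto.
Qed.

(* Koenig: for x < a the sequences coded below [k x] do not take all values at x, so a
   sequence [h] diagonalising against them has its code [F a h] above every [k x]. *)
Lemma card_regular a (k : M -> M) : exists n, forall x, ltM x a -> ltM (k x) n.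
Proof.
  destruct HF as [F HFinj].
  assert (Hmiss : forall x, exists m, ltM x a -> forall g, ltM (F a g) (k x) -> g x <> m).
  { intro x. apply NNPP. intro Hall.
    assert (Hx : ltM x a).
    { apply NNPP. intro Hx. apply Hall. exists x. intro. contradiction. }
    assert (Hcover : forall m, exists g, ltM (F a g) (k x) /\ g x = m).
    { intro m. apply NNPP. intro Hm. apply Hall. exists m. intros _ g Hg Hgx. apply Hm. eauto. }
    destruct (choice _ Hcover) as [G HG].
    apply (card_no_inj_below (k x) (fun m => F a (G m))); [intro m; apply HG |].
    intros u v _ _ E. rewrite <- (proj2 (HG u)), <- (proj2 (HG v)).
    exact (proj2 (HFinj _ _ _ _ E) x Hx). }
  destruct (choice _ Hmiss) as [h Hh].
  destruct (card_no_max (F a h)) as [n Hn]. exists n. intros x Hx.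
  refine (wo_le_lt woM _ Hn). apply (wo_not_lt woM). intro Hlt. exact (Hh x Hx h Hlt eq_refl).
Qed.

End SmallCardinal.

Section SuccessorCardinal.
Context {M K : Type} {ltM : M -> M -> Prop} {ltK : K -> K -> Prop}.
Hypotheses (HM : is_cardinal ltM) (HF : mu_lt_mu_eq_mu ltM)
  (mu_gt_two : exists a b c, ltM a b /\ ltM b c) (HK : is_succ_card ltM ltK).

Let woM : well_order ltM := proj1 HM.
Let woK : well_order ltK := proj1 HK.
Local Notation cf := (@cf_eq_mu M K ltK).

Lemma succ_card_inhabited : inhabited K.
Proof.
  apply NNPP. intro Hempty. destruct (card_inhabited mu_gt_two) as [a].
  apply (proj2 (proj2 HK)). exists (fun _ => a). intros x. destruct (Hempty (inhabits x)).
Qed.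

Lemma succ_card_no_max j : exists k, ltK j k.
Proof.
  apply NNPP. intro Hmax.
  assert (Hbelow : forall x, x <> j -> ltK x j).
  { intros x Hx. destruct (wo_not_lt woK (fun Hjx => Hmax (ex_intro _ x Hjx))) as [-> | H];
      [contradiction | exact H]. }
  destruct (card_pairing HM HF mu_gt_two) as [pr Hpr].
  destruct mu_gt_two as [a [b [_ [Hab _]]]].
  destruct (proj1 (proj2 HK) j) as [g Hg].
  apply (proj2 (proj2 HK)).
  exists (fun x => if excluded_middle_informative (x = j) then pr a a else pr b (g x)).
  intros u v _ _.
  destruct (excluded_middle_informative (u = j)) as [Hu | Hu];
    destruct (excluded_middle_informative (v = j)) as [Hv | Hv]; intro E;
    try apply Hpr in E.
  - congruence.
  - destruct E as [-> _]. destruct (wo_irrefl woM _ Hab).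
  - destruct E as [-> _]. destruct (wo_irrefl woM _ Hab).
  - apply Hg; auto. exact (proj2 E).
Qed.

Lemma succ_card_ub2 a b : exists c, ltK a c /\ ltK b c.
Proof.
  destruct (wo_trichotomy woK a b) as [H | [<- | H]].
  - destruct (succ_card_no_max b) as [c Hc]. exists c.
    split; [exact (wo_trans woK H Hc) | exact Hc].
  - destruct (succ_card_no_max a) as [c Hc]. exists c. split; exact Hc.
  - destruct (succ_card_no_max a) as [c Hc]. exists c.
    split; [exact Hc | exact (wo_trans woK H Hc)].
Qed.

Lemma succ_card_regular (b : M -> K) : exists k, forall m, ltK (b m) k.
Proof.
  apply NNPP. intro Hunb.
  assert (Hcov : forall k, exists m, ltK k (b m)).
  { intro k. destruct (succ_card_no_max k) as [k' Hk']. apply NNPP. intro Hk. apply Hunb.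
    exists k'. intro m.
    destruct (wo_not_lt woK (fun Hlt => Hk (ex_intro _ m (wo_trans woK Hk' Hlt))))
      as [E | H]; [| exact H].
    destruct Hk. exists m. rewrite E. exact Hk'. }
  destruct (choice _ Hcov) as [mk Hmk].
  destruct (choice _ (fun m => proj1 (proj2 HK) (b m))) as [G HG].
  destruct (card_pairing HM HF mu_gt_two) as [pr Hpr].
  apply (proj2 (proj2 HK)). exists (fun k => pr (mk k) (G (mk k) k)).
  intros u v _ _ E. apply Hpr in E. destruct E as [Emk EG]. rewrite <- Emk in EG.
  apply (HG (mk u)); [exact (Hmk u) | rewrite Emk; exact (Hmk v) | exact EG].
Qed.

Lemma small_image_bounded (X : K -> Prop) (g : K -> M) (b : K -> K) :
  inj_on X g -> exists k, forall x, X x -> ltK (b x) k.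
Proof.
  intros Hg. destruct succ_card_inhabited as [k0].
  set (pick := fun m => epsilon (inhabits k0) (fun x => X x /\ g x = m)).
  destruct (succ_card_regular (fun m => b (pick m))) as [k Hk].
  exists k. intros x Hx.
  assert (Hpick : X (pick (g x)) /\ g (pick (g x)) = g x)
    by (apply (epsilon_spec (inhabits k0) (fun y => X y /\ g y = g x)); eauto).
  rewrite <- (Hg _ _ (proj1 Hpick) Hx (proj2 Hpick)). apply Hk.
Qed.

Lemma segment_image_bounded k (b : K -> K) : exists k', forall x, ltK x k -> ltK (b x) k'.
Proof. destruct (proj1 (proj2 HK) k) as [g Hg]. exact (small_image_bounded _ g b Hg). Qed.

Lemma large_set_enumeration {P : Type} (p0 : P) (A : P -> Prop) :
  ~ (exists g : P -> M, inj_on A g) ->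
  exists a : K -> P, (forall k, A (a k)) /\ forall k k', ltK k k' -> a k <> a k'.
Proof.
  intros Hlarge.
  destruct (wo_rec_choice woK p0 (fun k a b => A b /\ forall k', ltK k' k -> a k' <> b)) as [a Ha].
  { intros k h h' E b [Ab Hb]. split; [exact Ab |].
    intros k' Hk'. rewrite <- E by exact Hk'. auto. }
  { intros k a _. apply NNPP. intro Hcovered.
    assert (Hpre : forall b, exists k', A b -> ltK k' k /\ a k' = b).
    { intro b. apply NNPP. intro Hb. apply Hcovered. exists b.
      split; [apply NNPP; intro; apply Hb; exists k; tauto |].
      intros k' Hk' E. apply Hb. exists k'. auto. }
    destruct (choice _ Hpre) as [c Hc].
    destruct (proj1 (proj2 HK) k) as [g Hg].
    apply Hlarge. exists (fun b => g (c b)). intros u v Au Av E.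
    rewrite <- (proj2 (Hc u Au)), <- (proj2 (Hc v Av)).
    f_equal. exact (Hg _ _ (proj1 (Hc u Au)) (proj1 (Hc v Av)) E). }
  exists a. split; [intro k; exact (proj1 (Ha k)) |].
  intros k k' Hkk'. exact (proj2 (Ha k') k Hkk').
Qed.

(* kmu is mu itself as an ordinal below mu^+: io enumerates its elements in increasing order. *)
Lemma mu_lt_eventually : exists kmu, forall i, ltK kmu i -> mu_lt ltM ltK i.
Proof.
  destruct succ_card_inhabited as [k0]. destruct (card_inhabited mu_gt_two) as [m0].
  destruct (wo_rec_choice woM k0
    (fun m io b => cofinal_in ltK b (fun y => exists m', ltM m' m /\ y = io m'))) as [io Hio].
  { intros m h h' E b [Hb Hcof]. split.
    - intros y [m' [Hm' ->]]. rewrite <- E by exact Hm'. apply Hb. eauto.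
    - intros j Hj. destruct (Hcof j Hj) as [y [[m' [Hm' ->]] Hjy]].
      exists (h' m'). split; [eauto | rewrite <- (E m' Hm'); exact Hjy]. }
  { intros m h _. destruct (succ_card_regular h) as [k Hk].
    apply (cofinal_in_exists woK _ k). intros y [m' [_ ->]]. apply Hk. }
  assert (Hmono : forall a b, ltM a b -> ltK (io a) (io b)).
  { intros a b Hab. apply (proj1 (Hio b)). eauto. }
  assert (Hdown : forall m y, ltK y (io m) -> exists n, y = io n).
  { intro m. induction (proj1 woM m) as [m _ IH]. intros y Hy.
    destruct (proj2 (Hio m) y Hy) as [x [[m' [Hm' ->]] [-> | Hlt]]]; eauto. }
  destruct (succ_card_regular io) as [k Hk].
  destruct (cofinal_in_exists woK (fun y => exists m, y = io m) k) as [kmu [Hbelow Hcof]].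
  { intros y [m ->]. apply Hk. }
  assert (Hrange : forall y, ltK y kmu -> exists n, y = io n).
  { intros y Hy. destruct (Hcof y Hy) as [x [[m ->] [-> | Hlt]]]; eauto. }
  destruct (inj_left_inverse m0 io (increasing_inj woM woK io Hmono)) as [iinv Hiinv].
  exists kmu. intros i Hi. exists kmu. split; [exact Hi |]. exists iinv. split.
  - intros x y Hx Hy. destruct (Hrange x Hx) as [a ->]. destruct (Hrange y Hy) as [b ->].
    rewrite !Hiinv. exact (increasing_lt_iff woM woK io Hmono a b).
  - intro m. exists (io m). split; [apply Hbelow; eauto | apply Hiinv].
Qed.

Lemma cf_eq_mu_of_increasing (d : M -> K) s :
  (forall a b, ltM a b -> ltK (d a) (d b)) -> cofinal_in ltK s (fun y => exists m, y = d m) -> cf s.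
Proof.
  intros Hmono [Hbelow Hcof]. destruct (card_inhabited mu_gt_two) as [m0].
  destruct (inj_left_inverse m0 d (increasing_inj woM woK d Hmono)) as [dinv Hdinv].
  split.
  - exists (fun y => exists m, y = d m). split; [split; assumption |]. exists dinv. split.
    + intros y y' [m ->] [m' ->] E. rewrite !Hdinv in E. congruence.
    + intro m. exists (d m). split; [eauto | apply Hdinv].
  - intros Y [HY HYcof].
    destruct (wo_rec_choice woM s (fun m e y => Y y /\ forall m', ltM m' m -> ltK (e m') y))
      as [e He].
    { intros m h h' E y [Yy Hy]. split; [exact Yy |].
      intros m' Hm'. rewrite <- E by exact Hm'. auto. }
    { intros m e IH.
      assert (Hidx : forall m', exists n, ltM m' m -> e m' = d n \/ ltK (e m') (d n)).
      { intro m'. destruct (classic (ltM m' m)) as [Hm' | Hm']; [| exists m; tauto].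
        destruct (Hcof (e m') (HY _ (proj1 (IH m' Hm')))) as [y [[n ->] Hn]]. eauto. }
      destruct (choice _ Hidx) as [idx Hidx'].
      destruct (card_regular HM HF mu_gt_two m idx) as [N HN].
      destruct (HYcof (d N) (Hbelow _ (ex_intro _ N eq_refl))) as [y [Yy Hy]].
      exists y. split; [exact Yy |]. intros m' Hm'.
      exact (wo_le_lt woK (Hidx' m' Hm') (wo_lt_le woK (Hmono _ _ (HN m' Hm')) Hy)). }
    exists e. split; [intro m; exact (proj1 (He m)) |]. intros a b _ _.
    exact (increasing_inj woM woK e (fun a b Hab => proj2 (He b) a Hab) a b).
Qed.

Lemma exists_cf_mu_accumulation (next : K -> K) k0 :
  (forall k, ltK k (next k)) ->
  exists s, ltK k0 s /\ cf s /\ forall j, ltK j s -> exists k, ltK j k /\ ltK (next k) s.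
Proof.
  intros Hnext. destruct (card_inhabited mu_gt_two) as [m0].
  destruct (wo_rec_choice woM k0
    (fun m d y => ltK k0 y /\ forall m', ltM m' m -> ltK (next (d m')) y)) as [d Hd].
  { intros m h h' E y [Hy Hnexty]. split; [exact Hy |].
    intros m' Hm'. rewrite <- E by exact Hm'. auto. }
  { intros m d _. destruct (succ_card_regular (fun m' => next (d m'))) as [k Hk].
    destruct (succ_card_ub2 k k0) as [y [Hky Hk0y]]. exists y.
    split; [exact Hk0y |]. intros m' _. exact (wo_trans woK (Hk m') Hky). }
  assert (Hmono : forall a b, ltM a b -> ltK (d a) (d b)).
  { intros a b Hab. exact (wo_trans woK (Hnext _) (proj2 (Hd b) a Hab)). }
  destruct (succ_card_regular d) as [k Hk].
  destruct (cofinal_in_exists woK (fun y => exists m, y = d m) k) as [s Hs].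
  { intros y [m ->]. apply Hk. }
  assert (Hds : forall m, ltK (d m) s) by (intro m; apply (proj1 Hs); eauto).
  exists s. split; [| split].
  - exact (wo_trans woK (proj1 (Hd m0)) (Hds m0)).
  - exact (cf_eq_mu_of_increasing d s Hmono Hs).
  - intros j Hj. destruct (proj2 Hs j Hj) as [y [[m ->] Hjm]].
    destruct (card_no_max HM HF mu_gt_two m) as [m1 Hm1].
    destruct (card_no_max HM HF mu_gt_two m1) as [m2 Hm2].
    exists (d m1). split; [exact (wo_le_lt woK Hjm (Hmono _ _ Hm1)) |].
    exact (wo_trans woK (proj2 (Hd m2) m1 Hm2) (Hds m2)).
Qed.

Lemma cf_mu_bounded_below i a (b : M -> K) :
  cf i -> (forall x, ltM x a -> ltK (b x) i) ->
  exists g, ltK g i /\ forall x, ltM x a -> ltK (b x) g.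
Proof.
  intros Hcf Hb. set (X := fun y => exists x, ltM x a /\ y = b x).
  destruct (classic (cofinal_in ltK i X)) as [Hcof | Hncof].
  - exfalso. destruct (proj2 Hcf X Hcof) as [g [HgX Hginj]].
    destruct (choice _ HgX) as [xm Hxm].
    apply (card_no_inj_below HM a xm); [intro m; apply Hxm |].
    intros u v _ _ E. apply Hginj; [exact I | exact I |].
    rewrite (proj2 (Hxm u)), (proj2 (Hxm v)), E. reflexivity.
  - apply NNPP. intro Hnb. apply Hncof. split; [intros y [x [Hx ->]]; auto |].
    intros j Hj. apply NNPP. intro Hj'. apply Hnb. exists j. split; [exact Hj |]. intros x Hx.
    destruct (wo_trichotomy woK (b x) j) as [H | [H | H]]; [exact H | |];
      destruct Hj'; exists (b x); (split; [exists x; auto |]); [left; symmetry | right]; exact H.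
Qed.

(* There are at most mu^{<mu} = mu sequences of length a with values below g. *)
Lemma inj_seq_bounded (X : K -> Prop) a (f : M -> K -> K) g :
  (forall i, X i -> forall x, ltM x a -> ltK (f x i) g) ->
  (forall i j, X i -> X j -> (forall x, ltM x a -> f x i = f x j) -> i = j) ->
  exists k, forall i, X i -> ltK i k.
Proof.
  intros Hbelow Hinj. destruct HF as [F HFinj]. destruct (proj1 (proj2 HK) g) as [G HG].
  apply (small_image_bounded X (fun i => F a (fun x => G (f x i)))).
  intros i j Xi Xj E. apply Hinj; [exact Xi | exact Xj |]. intros x Hx.
  apply HG; [exact (Hbelow i Xi x Hx) | exact (Hbelow j Xj x Hx) |].
  exact (proj2 (HFinj _ _ _ _ E) x Hx).
Qed.

Lemma club_mem_of_accumulation (C : K -> Prop) (next : K -> K) s :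
  club ltK C -> (forall k, exists c, C c /\ ltK k c /\ ltK c (next k)) ->
  (exists j, ltK j s) -> (forall j, ltK j s -> exists k, ltK j k /\ ltK (next k) s) -> C s.
Proof.
  intros HC Hnext Hnz Hacc. apply (proj2 HC s Hnz). intros j Hj.
  destruct (Hacc j Hj) as [k [Hjk Hks]]. destruct (Hnext k) as [c [Cc [Hkc Hcn]]].
  exists c. split; [exact Cc |].
  split; [exact (wo_trans woK Hjk Hkc) | exact (wo_trans woK Hcn Hks)].
Qed.

Lemma exists_next_in_clubs (C : K -> Prop) (Cl : M -> K -> Prop) a (beta : K -> K) k :
  club ltK C -> (forall x, ltM x a -> club ltK (Cl x)) ->
  exists n, (exists c, C c /\ ltK k c /\ ltK c n) /\
    (forall x, ltM x a -> exists c, Cl x c /\ ltK k c /\ ltK c n) /\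
    (forall g, ltK g k -> ltK (beta g) n).
Proof.
  intros HC HCl.
  destruct (proj1 HC k) as [c0 [Cc0 Hkc0]].
  destruct (choice (fun x c => ltM x a -> Cl x c /\ ltK k c)) as [cl Hcl].
  { intro x. destruct (classic (ltM x a)) as [Hx | Hx]; [| exists k; tauto].
    destruct (proj1 (HCl x Hx) k) as [c Hc]. eauto. }
  destruct (succ_card_regular cl) as [n1 Hn1].
  destruct (segment_image_bounded k beta) as [n2 Hn2].
  destruct (succ_card_ub2 c0 n1) as [n3 [Hc0n3 Hn1n3]].
  destruct (succ_card_ub2 n3 n2) as [n [Hn3n Hn2n]].
  exists n. split; [| split].
  - exists c0. split; [exact Cc0 |]. split; [exact Hkc0 | exact (wo_trans woK Hc0n3 Hn3n)].
  - intros x Hx. exists (cl x). destruct (Hcl x Hx) as [Hclx Hkcl].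
    split; [exact Hclx |]. split; [exact Hkcl |].
    exact (wo_trans woK (Hn1 x) (wo_trans woK Hn1n3 Hn3n)).
  - intros g Hg. exact (wo_trans woK (Hn2 g Hg) Hn2n).
Qed.

Lemma exists_cf_mu_in_clubs (C : K -> Prop) (Cl : M -> K -> Prop) a (beta : K -> K) k0 :
  club ltK C -> (forall x, ltM x a -> club ltK (Cl x)) ->
  exists s, ltK k0 s /\ cf s /\ C s /\ (forall x, ltM x a -> Cl x s) /\
    forall g, ltK g s -> ltK (beta g) s.
Proof.
  intros HC HCl.
  destruct (choice _ (fun k => exists_next_in_clubs C Cl a beta k HC HCl)) as [next Hnext].
  destruct (exists_cf_mu_accumulation next k0) as [s [Hk0s [Hcfs Hacc]]].
  { intro k. destruct (proj1 (Hnext k)) as [c [_ [Hkc Hcn]]]. exact (wo_trans woK Hkc Hcn). }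
  assert (Hnz : exists j, ltK j s) by eauto.
  exists s. split; [exact Hk0s |]. split; [exact Hcfs |]. split; [| split].
  - exact (club_mem_of_accumulation C next s HC (fun k => proj1 (Hnext k)) Hnz Hacc).
  - intros x Hx.
    exact (club_mem_of_accumulation (Cl x) next s (HCl x Hx)
      (fun k => proj1 (proj2 (Hnext k)) x Hx) Hnz Hacc).
  - intros g Hg. destruct (Hacc g Hg) as [k [Hgk Hks]].
    exact (wo_trans woK (proj2 (proj2 (Hnext k)) g Hgk) Hks).
Qed.

Lemma separated_regressive_bound (X : K -> Prop) a (f : M -> K -> K) :
  (forall i, X i -> cf i) -> (forall i, X i -> forall x, ltM x a -> ltK (f x i) i) ->
  (forall i j, X i -> X j -> (forall x, ltM x a -> f x i = f x j) -> i = j) ->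
  exists gam beta : K -> K, forall i, X i -> ltK (gam i) i /\ ltK i (beta (gam i)).
Proof.
  intros Hcf Hreg Hsep.
  assert (Hgam : forall i, exists g, X i -> ltK g i /\ forall x, ltM x a -> ltK (f x i) g).
  { intro i. destruct (classic (X i)) as [Xi | Xi]; [| exists i; tauto].
    destruct (cf_mu_bounded_below i a (fun x => f x i) (Hcf i Xi) (Hreg i Xi)) as [g Hg]. eauto. }
  destruct (choice _ Hgam) as [gam Hgam'].
  assert (Hfib : forall g, exists k, forall i, X i -> gam i = g -> ltK i k).
  { intro g. destruct (inj_seq_bounded (fun i => X i /\ gam i = g) a f g) as [k Hk].
    - intros i [Xi <-]. exact (proj2 (Hgam' i Xi)).
    - intros i j [Xi _] [Xj _]. exact (Hsep i j Xi Xj).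
    - exists k. intros i Xi Hi. exact (Hk i (conj Xi Hi)). }
  destruct (choice _ Hfib) as [beta Hbeta].
  exists gam, beta. intros i Xi. exact (conj (proj1 (Hgam' i Xi)) (Hbeta _ i Xi eq_refl)).
Qed.

Lemma exists_agreeing_pair (E : K -> Prop) a (f : M -> K -> K) :
  @forallD M K ltK E ->
  (forall x, ltM x a -> exists C, club ltK C /\ forall i, C i -> ltK (f x i) i) ->
  exists i j, E i /\ E j /\ mu_lt ltM ltK i /\ ltK i j /\ cf i /\ cf j /\
    forall x, ltM x a -> f x i = f x j.
Proof.
  intros [CE [HCE HE]] Hreg.
  destruct (choice (fun x C => ltM x a -> club ltK C /\ forall i, C i -> ltK (f x i) i))
    as [Cl HCl].
  { intro x. destruct (classic (ltM x a)) as [Hx | Hx]; [| exists (fun _ => True); tauto].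
    destruct (Hreg x Hx) as [C HC]. eauto. }
  set (S := fun i => mu_lt ltM ltK i /\ cf i /\ CE i /\ forall x, ltM x a -> Cl x i).
  apply NNPP. intro Hnone.
  destruct (separated_regressive_bound S a f) as [gam [beta Hgb]].
  - intros i Si. exact (proj1 (proj2 Si)).
  - intros i Si x Hx. exact (proj2 (HCl x Hx) i (proj2 (proj2 (proj2 Si)) x Hx)).
  - intros i j [Hmui [Hcfi [Ci _]]] [Hmuj [Hcfj [Cj _]]] Hag.
    destruct (wo_trichotomy woK i j) as [H | [H | H]]; [| exact H |]; exfalso; apply Hnone.
    + exists i, j. exact (conj (HE i Ci Hcfi) (conj (HE j Cj Hcfj)
        (conj Hmui (conj H (conj Hcfi (conj Hcfj Hag)))))).
    + exists j, i. exact (conj (HE j Cj Hcfj) (conj (HE i Ci Hcfi)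
        (conj Hmuj (conj H (conj Hcfj (conj Hcfi (fun x Hx => eq_sym (Hag x Hx)))))))).
  - destruct mu_lt_eventually as [kmu Hkmu].
    destruct (exists_cf_mu_in_clubs CE Cl a beta kmu HCE (fun x Hx => proj1 (HCl x Hx)))
      as [s [Hkmus [Hcfs [CEs [Cls Hbeta]]]]].
    destruct (Hgb s (conj (Hkmu s Hkmus) (conj Hcfs (conj CEs Cls)))) as [Hgs Hsb].
    exact (wo_asym woK Hsb (Hbeta _ Hgs)).
Qed.

End SuccessorCardinal.

Section Game.
Context {M K P : Type} {ltM : M -> M -> Prop} {ltK : K -> K -> Prop}
  (leP : P -> P -> Prop) (e : P) (eps : M).
Hypotheses (woM : well_order ltM) (woK : well_order ltK) (K_no_max : forall j, exists k, ltK j k).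

Lemma club_nonzero : club ltK (fun i => exists k, ltK k i).
Proof.
  split; [| intros i Hi _; exact Hi].
  intro j. destruct (K_no_max j) as [c Hc]. eauto.
Qed.

Lemma forallD_of_forall (A : K -> Prop) : (forall i, A i) -> @forallD M K ltK A.
Proof.
  intros HA. exists (fun _ => True). split; [| intros i _ _; apply HA].
  split; [| auto]. intro j. destruct (K_no_max j) as [c Hc]. eauto.
Qed.

Lemma I_legal_regressive (s : @strategyI M K P) p z :
  I_legal ltM ltK leP e s p z -> exists C, club ltK C /\ forall i, C i -> ltK (snd (s z p) i) i.
Proof.
  intros [Hfirst Hlater]. destruct (classic (exists x, ltM x z)) as [Hz | Hz].
  - exact (proj2 (Hlater Hz)).
  - assert (Hmin : forall x, ~ ltM x z) by (intros x Hx; apply Hz; eauto).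
    exists (fun i => exists k, ltK k i). split; [exact club_nonzero |].
    intros i [k Hki]. exact (wo_min_lt woK (proj2 (Hfirst Hmin i)) Hki).
Qed.

Lemma play_against (s : @strategyI M K P) (reply : M -> (K -> P) -> K -> P) :
  nonanticipating ltM s -> exists p, forall z, p z = reply z (fst (s z p)).
Proof.
  intros Hna.
  destruct (wo_rec_choice woM (fun _ => e) (fun z h q => q = reply z (fst (s z h)))) as [p Hp].
  - intros z h h' E q ->. f_equal. apply functional_extensionality. intro i.
    exact (proj1 (Hna z h h' (fun x Hx i' => f_equal (fun r => r i') (E x Hx)) i)).
  - intros z h _. eauto.
  - exists p. exact Hp.
Qed.

(* II copies I's moves, except that at the first move she plays a_i wherever this is
   above I's q_i; since I's legal first move is e, II's first move is then a. *)
Lemma II_opens_with (s : @strategyI M K P) (a : K -> P) :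
  forcing_notion leP e -> nonanticipating ltM s ->
  exists p, II_legal ltM ltK leP eps s p /\
    forall z, (forall x, ~ ltM x z) -> I_legal ltM ltK leP e s p z -> p z = a.
Proof.
  intros [Hrefl [_ He]] Hna.
  set (reply := fun z (q : K -> P) i =>
    if excluded_middle_informative ((forall x, ~ ltM x z) /\ leP (q i) (a i)) then a i else q i).
  destruct (play_against s reply Hna) as [p Hp].
  exists p. split.
  - intros z _. apply forallD_of_forall. intro i. rewrite Hp. unfold reply.
    destruct (excluded_middle_informative _) as [[_ Hle] | _]; [exact Hle | apply Hrefl].
  - intros z Hmin [Hfirst _]. apply functional_extensionality. intro i. rewrite Hp. unfold reply.
    destruct (excluded_middle_informative _) as [_ | Hnot]; [reflexivity |].
    destruct Hnot. split; [exact Hmin |]. rewrite (proj1 (Hfirst Hmin i)). apply He.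
Qed.

End Game.

Theorem claim1p3 (M K P : Type) (ltM : M -> M -> Prop) (ltK : K -> K -> Prop)
  (leP : P -> P -> Prop) (e : P) (eps : M) :
  is_cardinal ltM -> mu_lt_mu_eq_mu ltM -> is_succ_card ltM ltK ->
  is_limit ltM eps -> forcing_notion leP e ->
  satisfies_star ltM ltK leP e eps ->
  @chain_condition M P leP.
Proof.
  intros HM HF HK [[x Hx] Hlim] HP [s [Hna Hwin]] A Hanti.
  assert (mu_gt_two : exists a b c, ltM a b /\ ltM b c).
  { destruct (Hlim x Hx) as [y Hy]. eauto. }
  destruct (wo_least (proj1 HM) (fun z => ltM z eps) x Hx) as [z0 [Hz0 Hz0min]].
  assert (Hz0first : forall y, ~ ltM y z0).
  { intros y Hy. exact (Hz0min y (wo_trans (proj1 HM) Hy Hz0) Hy). }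
  pose proof (succ_card_no_max HM HF mu_gt_two HK) as K_no_max.
  apply NNPP. intro Hlarge.
  destruct (large_set_enumeration HK e A Hlarge) as [a [HaA Ha_inj]].
  destruct (II_opens_with leP e eps (proj1 HM) K_no_max s a HP Hna) as [p [HII Hopen]].
  destruct (Hwin p HII) as [HIl [E [HE Hwins]]].
  destruct (exists_agreeing_pair HM HF mu_gt_two HK E eps (fun z i => snd (s z p) i) HE
    (fun z Hz => I_legal_regressive leP e (proj1 HK) K_no_max s p z (HIl z Hz)))
    as [i [j [Ei [Ej [Hmu [Hij [Hcfi [Hcfj Hag]]]]]]]].
  destruct (Hwins i j Ei Ej Hmu Hij Hcfi Hcfj Hag) as [r Hr].
  destruct (Hr z0 Hz0) as [Hir Hjr]. rewrite (Hopen z0 Hz0first (HIl z0 Hz0)) in Hir, Hjr.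
  exact (Hanti (a i) (a j) (HaA i) (HaA j) (Ha_inj i j Hij) (ex_intro _ r (conj Hir Hjr))).
Qed.
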